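(* Let $S$ be a Hausdorff countably compact semitopological semigroup which is an orthogonal sum $S=\sum_{i\in\mathscr I}B^0_{\lambda_i}(S_i)$ of topological Brandt $\lambda_i^0$-extensions of semitopological monoids $S_i$ with zeros. Then for every open neighbourhood $U(0)$ of the zero $0$ of $S$ the set of triples $(i,\alpha_i,\beta_i)$ with $i\in\mathscr I$, $\alpha_i,\beta_i\in\lambda_i$ and $(S_i)_{\alpha_i,\beta_i}\not\subseteq U(0)$ is finite. Moreover, for every $i\in\mathscr I$ the subspace $B^0_{\lambda_i}(S_i)$ of $S$ is countably compact.
   Context: All spaces are Hausdorff; a semitopological semigroup is a Hausdorff space with separately continuous associative operation. For a semigroup $T$ with zero $0_T$ and a cardinal $\lambda\ge1$, $B^0_\lambda(T)=(\lambda\times (T\setminus\{0_T\})\times\lambda)\cup\{0\}$ with $(\alpha,a,\beta)(\gamma,b,\delta)=(\alpha,ab,\delta)$ if $\beta=\gamma$ and $ab\ne0_T$, and $0$ otherwise, $0$ a zero. For $A\subseteq T$, $A_{\alpha,\beta}=\{(\alpha,s,\beta):s\in A\setminus\{0_T\}\}\cup\{0\}$ if $0_T\in A$ and $\{(\alpha,s,\beta):s\in A\}$ otherwise. A topological Brandt $\lambda^0$-extension of a semitopological monoid $T$ with zero is $B^0_\lambda(T)$ with a topology making it a semitopological semigroup such that for some $\alpha\in\lambda$ the map $s\mapsto(\alpha,s,\alpha)$ ($0_T\mapsto0$) is a homeomorphism $T\to T_{\alpha,\alpha}$. The orthogonal sum of semigroups $T_\iota$ with zeros is $\{0\}\cup\bigcup_\iota(T_\iota\setminus\{0_\iota\})$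 with products computed in $T_\iota$ when both factors lie in the same $T_\iota$ and the product is non-zero, and $0$ otherwise. *)

From Stdlib Require Import List.

Record Topology (X : Type) : Type := {
  open : (X -> Prop) -> Prop;
  open_full : open (fun _ => True);
  open_inter : forall U V, open U -> open V -> open (fun x => U x /\ V x);
  open_union : forall F : (X -> Prop) -> Prop,
      (forall U, F U -> open U) -> open (fun x => exists U, F U /\ U x)
}.
Arguments open {X} t U.

Definition hausdorff {X : Type} (t : Topology X) : Prop :=
  forall x y : X, x <> y ->
    exists U V, open t U /\ open t V /\ U x /\ V y /\ forall z, ~ (U z /\ V z).

Definition continuous {X Y : Type} (tX : Topology X) (tY : Topology Y)
  (f : X -> Y) : Prop :=
  forall V, open tY V -> open tX (fun x => V (f x)).

Definition embedding {X Y : Type} (tX : Topology X) (tY : Topology Y)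
  (f : X -> Y) : Prop :=
  (forall x y, f x = f y -> x = y) /\ continuous tX tY f /\
  forall U, open tX U -> exists V, open tY V /\ forall x, U x <-> V (f x).

Definition countably_compact_subset {X : Type} (t : Topology X)
  (A : X -> Prop) : Prop :=
  forall U : nat -> X -> Prop,
    (forall n, open t (U n)) ->
    (forall x, A x -> exists n, U n x) ->
    exists N, forall x, A x -> exists n, n <= N /\ U n x.

Definition countably_compact {X : Type} (t : Topology X) : Prop :=
  countably_compact_subset t (fun _ => True).

Definition semitopological_semigroup {X : Type} (t : Topology X)
  (mul : X -> X -> X) : Prop :=
  hausdorff t /\
  (forall a b c, mul a (mul b c) = mul (mul a b) c) /\
  (forall a, continuous t t (mul a)) /\
  (forall a, continuous t t (fun x => mul x a)).

Definition semitopological_monoid_with_zero {T : Type} (t : Topology T)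
  (mul : T -> T -> T) (z one : T) : Prop :=
  semitopological_semigroup t mul /\
  (forall x, mul one x = x /\ mul x one = x) /\
  (forall x, mul z x = z /\ mul x z = z).

(* S (with product mulS and element zS) is the orthogonal sum of the Brandt
   extensions B^0_{Λ i}(T i): e i α s β is the element (α,s,β) of the i-th
   summand, and e i α 0_i β is the zero of S. *)
Definition is_orthogonal_sum_of_brandt {S I : Type} (Λ T : I -> Type)
  (mulT : forall i, T i -> T i -> T i) (zT : forall i, T i)
  (mulS : S -> S -> S) (zS : S)
  (e : forall i, Λ i -> T i -> Λ i -> S) : Prop :=
  (forall x, mulS zS x = zS /\ mulS x zS = zS) /\
  (forall i a b, e i a (zT i) b = zS) /\
  (forall i a s b, s <> zT i -> e i a s b <> zS) /\
  (forall i j a s b a' s' b', s <> zT i -> s' <> zT j ->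
     e i a s b = e j a' s' b' ->
     existT (fun k => (Λ k * T k * Λ k)%type) i (a, s, b)
     = existT (fun k => (Λ k * T k * Λ k)%type) j (a', s', b')) /\
  (forall x, x = zS \/ exists i a s b, x = e i a s b) /\
  (forall i a s b c t d, b = c ->
     mulS (e i a s b) (e i c t d) = e i a (mulT i s t) d) /\
  (forall i a s b c t d, b <> c -> mulS (e i a s b) (e i c t d) = zS) /\
  (forall i j a s b c t d, i <> j -> mulS (e i a s b) (e j c t d) = zS).

Definition brandt_part {S I : Type} {Λ T : I -> Type} (zS : S)
  (e : forall i, Λ i -> T i -> Λ i -> S) (i : I) : S -> Prop :=
  fun x => x = zS \/ exists a s b, x = e i a s b.

From Stdlib Require Import List.
From Stdlib Require Import Classical ClassicalEpsilon Lia PeanoNat.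

(* Two facts of general topology carry the argument.
   (1) In a countably compact space every "discrete" family of non-empty sets
       (each point has a neighbourhood meeting at most one member) is finite:
       otherwise an injective sequence of members yields a countable open
       cover without finite subcover.
   (2) Continuous images of countably compact spaces are countably compact,
       and a finite family of countably compact sets admits a uniform bound
       for any countable open cover.
   In the orthogonal sum, the sandwich y |-> (α,1,α) y (β,1,β) is continuous
   and maps S onto the cell (S_i)_{α,β} (zero included).  Hence every cell is
   countably compact, and every non-zero point has a neighbourhood (the
   sandwich-preimage of a set separating it from 0) meeting only its own
   cell.  So the parts of the cells outside U(0) form a discrete family, and
   (1) gives the first claim.  For the second, a countable cover of a summand
   has a member containing 0; only finitely many cells escape that member,
   and (2) bounds the cover on those cells. *)

Lemma injective_sequence {J : Type} (P : J -> Prop) :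
  ~ (exists l : list J, forall j, P j -> In j l) ->
  exists u : nat -> J, (forall n, P (u n)) /\ (forall m n, u m = u n -> m = n).
Proof.
  intro Hinf.
  assert (Hnext : forall l : list J, {j | P j /\ ~ In j l}).
  { intro l. apply constructive_indefinite_description.
    apply NNPP; intro Hnone. apply Hinf. exists l. intros j Pj.
    apply NNPP; intro Hj. apply Hnone. exists j. split; assumption. }
  (* prefix n lists the first n terms of the sequence *)
  set (prefix := fix prefix n :=
         match n with
         | O => nil
         | S n' => proj1_sig (Hnext (prefix n')) :: prefix n'
         end).
  set (u := fun n => proj1_sig (Hnext (prefix n))).
  assert (Hprefix : forall n k, k < n -> In (u k) (prefix n)).
  { induction n as [|n IH]; intros k Hk; [lia|].
    simpl. destruct (Nat.eq_dec k n) as [->|Hkn]; [left; reflexivity|].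
    right. apply IH. lia. }
  assert (Hfresh : forall n, ~ In (u n) (prefix n))
    by (intro n; exact (proj2 (proj2_sig (Hnext (prefix n))))).
  exists u. split.
  - intro n. exact (proj1 (proj2_sig (Hnext (prefix n)))).
  - intros m n Hmn. destruct (Nat.lt_total m n) as [Hlt|[Heq|Hgt]]; auto.
    + exfalso. apply (Hfresh n). rewrite <- Hmn. apply Hprefix, Hlt.
    + exfalso. apply (Hfresh m). rewrite Hmn. apply Hprefix, Hgt.
Qed.

Lemma discrete_family_finite {X J : Type} (t : Topology X) (D : J -> X -> Prop) :
  countably_compact t ->
  (forall x, exists W, open t W /\ W x /\
     forall j j' z z', W z -> D j z -> W z' -> D j' z' -> j = j') ->
  exists l : list J, forall j, (exists z, D j z) -> In j l.
Proof.
  intros Hcc Hdiscrete. apply NNPP; intro Hinf.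
  destruct (injective_sequence _ Hinf) as [u [Hne Hinj]].
  set (Cov := fun n x => exists W,
          (open t W /\ forall m z, W z -> D (u m) z -> m <= n) /\ W x).
  destruct (Hcc Cov) as [N HN].
  - intro n. apply open_union. intros W HW. exact (proj1 HW).
  - intros x _. destruct (Hdiscrete x) as [W [HW [Wx Hsingle]]].
    destruct (classic (exists m z, W z /\ D (u m) z)) as [[m [z [Wz Dz]]]|Hnone].
    + exists m, W. repeat split; [exact HW| |exact Wx].
      intros m' z' Wz' Dz'. rewrite (Hinj m' m (Hsingle _ _ _ _ Wz' Dz' Wz Dz)). lia.
    + exists 0, W. repeat split; [exact HW| |exact Wx].
      intros m z Wz Dz. exfalso. apply Hnone. exists m, z. split; assumption.
  - destruct (Hne (S N)) as [z Dz].
    destruct (HN z I) as [n [Hn [W [[_ HW] Wz]]]].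
    specialize (HW _ _ Wz Dz). lia.
Qed.

Lemma countably_compact_image {X Y : Type} (tX : Topology X) (tY : Topology Y)
  (f : X -> Y) (A : Y -> Prop) :
  countably_compact tX -> continuous tX tY f ->
  (forall y, A (f y)) -> (forall x, A x -> exists y, x = f y) ->
  countably_compact_subset tY A.
Proof.
  intros Hcc Hf Hinto Honto U HU Hcov.
  destruct (Hcc (fun n y => U n (f y))) as [N HN].
  - intro n. apply Hf, HU.
  - intros y _. apply Hcov, Hinto.
  - exists N. intros x Hx. destruct (Honto x Hx) as [y ->]. exact (HN y I).
Qed.

Lemma finite_family_bound {X J : Type} (t : Topology X) (C : J -> X -> Prop)
  (U : nat -> X -> Prop) (l : list J) :
  (forall j, In j l -> countably_compact_subset t (C j)) ->
  (forall n, open t (U n)) ->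
  exists N, forall j, In j l -> (forall x, C j x -> exists n, U n x) ->
    forall x, C j x -> exists n, n <= N /\ U n x.
Proof.
  intros Hcc HU. induction l as [|j l IH].
  - exists 0. intros j [].
  - destruct IH as [N HN]; [intros k Hk; apply Hcc; right; exact Hk|].
    destruct (classic (forall x, C j x -> exists n, U n x)) as [Hcov|Hncov].
    + destruct (Hcc j (or_introl eq_refl) U HU Hcov) as [N' HN'].
      exists (N + N'). intros k [<-|Hk] Hcovk x Hx.
      * destruct (HN' x Hx) as [n [Hn Hu]]. exists n. split; [lia|exact Hu].
      * destruct (HN k Hk Hcovk x Hx) as [n [Hn Hu]]. exists n. split; [lia|exact Hu].
    + exists N. intros k [<-|Hk] Hcovk; [contradiction|]. exact (HN k Hk Hcovk).
Qed.

Section OrthogonalSum.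

Variables (S : Type) (tS : Topology S) (mulS : S -> S -> S) (zS : S)
  (I : Type) (Λ T : I -> Type) (mulT : forall i, T i -> T i -> T i)
  (zT oneT : forall i, T i) (e : forall i, Λ i -> T i -> Λ i -> S).

Hypothesis Hsg : semitopological_semigroup tS mulS.
Hypothesis Hone : forall i s, mulT i (oneT i) s = s /\ mulT i s (oneT i) = s.
Hypothesis Hsum : is_orthogonal_sum_of_brandt Λ T mulT zT mulS zS e.

Definition cell_index : Type := {i : I & (Λ i * Λ i)%type}.

Definition cell (p : cell_index) : S -> Prop :=
  fun x => x = zS \/
    exists s, x = e (projT1 p) (fst (projT2 p)) s (snd (projT2 p)).

Definition sandwich (i : I) (a b : Λ i) (y : S) : S :=
  mulS (mulS (e i a (oneT i) a) y) (e i b (oneT i) b).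

Lemma sandwich_continuous i a b : continuous tS tS (sandwich i a b).
Proof.
  destruct Hsg as (_ & _ & Hleft & Hright).
  intros V HV. exact (Hleft _ _ (Hright _ V HV)).
Qed.

Lemma sandwich_zero i a b : sandwich i a b zS = zS.
Proof.
  destruct Hsum as (Hz & _).
  unfold sandwich. rewrite (proj2 (Hz _)). apply Hz.
Qed.

Lemma sandwich_cell i a s b : sandwich i a b (e i a s b) = e i a s b.
Proof.
  destruct Hsum as (_ & _ & _ & _ & _ & Hmul & _).
  unfold sandwich. rewrite !Hmul by reflexivity.
  rewrite (proj1 (Hone i s)), (proj2 (Hone i s)). reflexivity.
Qed.

Lemma sandwich_triple j c d i a s b :
  sandwich j c d (e i a s b) = zS \/
  (existT (fun k => (Λ k * Λ k)%type) i (a, b) = existT _ j (c, d) /\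
   sandwich j c d (e i a s b) = e i a s b).
Proof.
  destruct Hsum as (Hz & _ & _ & _ & _ & Hmul & Hmul0 & Hmulij).
  destruct (classic (j = i)) as [<-|Hji].
  - destruct (classic (c = a)) as [<-|Hca].
    + destruct (classic (b = d)) as [<-|Hbd].
      * right. split; [reflexivity|apply sandwich_cell].
      * left. unfold sandwich. rewrite Hmul by reflexivity. apply Hmul0, Hbd.
    + left. unfold sandwich. rewrite Hmul0 by exact Hca. apply Hz.
  - left. unfold sandwich. rewrite Hmulij by exact Hji. apply Hz.
Qed.

Lemma sandwich_in_cell i a b y : cell (existT _ i (a, b)) (sandwich i a b y).
Proof.
  destruct Hsum as (_ & _ & _ & _ & Hdec & _).
  destruct (Hdec y) as [->|[k [c [t [d ->]]]]].
  - left. apply sandwich_zero.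
  - destruct (sandwich_triple i a b k c t d) as [Hzero|[Hcell Hfix]].
    + left. exact Hzero.
    + rewrite Hfix, <- Hcell. right. exists t. reflexivity.
Qed.

Lemma cell_countably_compact :
  countably_compact tS -> forall p, countably_compact_subset tS (cell p).
Proof.
  intros Hcc [i [a b]].
  apply (countably_compact_image tS tS (sandwich i a b)).
  - exact Hcc.
  - apply sandwich_continuous.
  - apply sandwich_in_cell.
  - intros x [->|[s ->]].
    + exists zS. symmetry. apply sandwich_zero.
    + exists (e i a s b). symmetry. apply sandwich_cell.
Qed.

Lemma isolating_neighbourhood x :
  x <> zS -> exists q W, open tS W /\ W x /\
    forall p z, W z -> cell p z -> p = q.
Proof.
  intro Hx.
  destruct Hsum as (_ & _ & _ & _ & Hdec & _).
  destruct Hsg as (Hhaus & _).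
  destruct (Hdec x) as [|[j [c [t [d Hxe]]]]]; [contradiction|].
  destruct (Hhaus x zS Hx) as [V [V' [HV [_ [Vx [V'z Hdisj]]]]]].
  exists (existT _ j (c, d)), (fun z => V (sandwich j c d z)).
  split; [apply sandwich_continuous, HV|]. split.
  - rewrite Hxe, sandwich_cell, <- Hxe. exact Vx.
  - intros [i [a b]] z Vz [->|[s ->]]; simpl in Vz.
    + rewrite sandwich_zero in Vz. destruct (Hdisj zS (conj Vz V'z)).
    + destruct (sandwich_triple j c d i a s b) as [Hzero|[Hsame _]]; [|exact Hsame].
      rewrite Hzero in Vz. destruct (Hdisj zS (conj Vz V'z)).
Qed.

Lemma escaping_cells_finite :
  countably_compact tS -> forall U, open tS U -> U zS ->
  exists l : list cell_index, forall p, (exists z, cell p z /\ ~ U z) -> In p l.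
Proof.
  intros Hcc U HU HU0.
  apply (discrete_family_finite tS (fun p z => cell p z /\ ~ U z) Hcc).
  intro x. destruct (classic (x = zS)) as [->|Hx].
  - exists U. repeat split; [exact HU|exact HU0|].
    intros j j' z z' Uz [_ Hz]. contradiction.
  - destruct (isolating_neighbourhood x Hx) as [q [W [HW [Wx Hq]]]].
    exists W. repeat split; [exact HW|exact Wx|].
    intros j j' z z' Wz [Cz _] Wz' [Cz' _].
    rewrite (Hq j z Wz Cz), (Hq j' z' Wz' Cz'). reflexivity.
Qed.

Lemma summand_countably_compact :
  countably_compact tS -> forall i, countably_compact_subset tS (brandt_part zS e i).
Proof.
  intros Hcc i U HU Hcov.
  destruct (Hcov zS (or_introl eq_refl)) as [n0 U0].
  destruct (escaping_cells_finite Hcc (U n0) (HU n0) U0) as [l Hl].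
  destruct (finite_family_bound tS cell U l
              (fun p _ => cell_countably_compact Hcc p) HU) as [N HN].
  exists (n0 + N). intros x [->|[a [s [b ->]]]].
  - exists n0. split; [lia|exact U0].
  - destruct (classic (U n0 (e i a s b))) as [Hin|Hout].
    + exists n0. split; [lia|exact Hin].
    + assert (Hs : cell (existT _ i (a, b)) (e i a s b))
        by (right; exists s; reflexivity).
      assert (Hcell_cov : forall x, cell (existT _ i (a, b)) x -> exists n, U n x).
      { intros x Hx. apply Hcov.
        destruct Hx as [->|[s' ->]]; [left; reflexivity|right; eauto]. }
      destruct (HN _ (Hl _ (ex_intro _ _ (conj Hs Hout))) Hcell_cov _ Hs)
        as [n [Hn Hu]].
      exists n. split; [lia|exact Hu].
Qed.

End OrthogonalSum.

Theorem proposition2p4 (S : Type) (tS : Topology S) (mulS : S -> S -> S)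
  (zS : S) (I : Type) (Λ T : I -> Type) (tT : forall i, Topology (T i))
  (mulT : forall i, T i -> T i -> T i) (zT oneT : forall i, T i)
  (e : forall i, Λ i -> T i -> Λ i -> S) :
  semitopological_semigroup tS mulS ->
  countably_compact tS ->
  (forall i, semitopological_monoid_with_zero (tT i) (mulT i) (zT i) (oneT i)) ->
  is_orthogonal_sum_of_brandt Λ T mulT zT mulS zS e ->
  (forall i, exists α : Λ i, embedding (tT i) tS (fun s => e i α s α)) ->
  (forall U : S -> Prop, open tS U -> U zS ->
     exists l : list {i : I & (Λ i * Λ i)%type},
       forall i (a b : Λ i), (exists s : T i, ~ U (e i a s b)) ->
         In (existT (fun k => (Λ k * Λ k)%type) i (a, b)) l) /\
  (forall i, countably_compact_subset tS (brandt_part zS e i)).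
Proof.
  intros Hsg Hcc Hmon Hsum _.
  assert (Hone : forall i s, mulT i (oneT i) s = s /\ mulT i s (oneT i) = s)
    by (intro i; exact (proj1 (proj2 (Hmon i)))).
  split.
  - intros U HU HU0.
    destruct (escaping_cells_finite S tS mulS zS I Λ T mulT zT oneT e Hsg Hone Hsum
                Hcc U HU HU0) as [l Hl].
    exists l. intros i a b [s Hs]. apply Hl.
    exists (e i a s b). split; [right; exists s; reflexivity|exact Hs].
  - exact (summand_countably_compact S tS mulS zS I Λ T mulT zT oneT e Hsg Hone Hsum Hcc).
Qed.
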